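(* Let $C\subseteq\mathbb{R}^n$ be a nonempty compact convex set with diameter $D$, and let $f:\mathbb{R}^n\to\mathbb{R}$ be an abs-smooth function such that, for every $x\in C$, its piecewise linearization $f_{PL,x}$ is convex on $C$. Let $\mathcal{C}_f$ be the curvature constant of $f$ on $C$, let $x^*\in C$ be a minimizer of $f$ on $C$, and fix $\epsilon\ge0$. Consider the relaxed ASFW iteration: $x_0\in C$, and for $t=0,1,2,\dots$ set $a_t=2t+2$, $A_t=\sum_{i=0}^t a_i=(t+1)(t+2)$, $\alpha_t=a_t/A_t=2/(t+2)$, choose $v_t\in C$ with $$\Delta f(x_t;\alpha_t(v_t-x_t))\le\min_{w\in C}\Delta f(x_t;\alpha_t(w-x_t))+\tfrac12\epsilon\alpha_t^2\mathcal{C}_f,$$ and set $x_{t+1}=(1-\alpha_t)x_t+\alpha_t v_t$. Define $$L_t=\frac{1}{A_t}\Big(\sum_{i=0}^t a_if(x_i)+\sum_{i=0}^t a_i\Big[\frac{\Delta f(x_i;\alpha_i(v_i-x_i))}{\alpha_i}-\frac12\mathcal{C}_f-\frac{\alpha_i}{2}\epsilon\,\mathcal{C}_f\Big]\Big)$$ and $G_t=f(x_{t+1})-L_t$. Then for every $t\ge0$, $$f(x_{t+1})-f(x^* )\le G_t\le\frac12\mathcal{C}_f+\frac{2\,\mathcal{C}_f}{t+2}(1+2\epsilon).$$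
   Context: A function $f:\mathbb{R}^n\to\mathbb{R}$ is abs-smooth if it is locally Lipschitz and admits an abs-smooth form: for some $s\in\mathbb{N}\cup\{0\}$ there are $F=(F_1,\dots,F_s)\in\mathcal{C}^d(\mathbb{R}^{n+s+s},\mathbb{R}^s)$ and $\varphi\in\mathcal{C}^d(\mathbb{R}^{n+s},\mathbb{R})$ with $d\ge1$ such that $y=f(x)$ is computed by $z_i=F_i(x,z_1,\dots,z_{i-1},|z_1|,\dots,|z_{i-1}|)$ for $i=1,\dots,s$ and $y=\varphi(x,z)$. For a point $\mathring{x}$, write $\mathring z=z(\mathring x)$ and let $Z=\partial_x F$, $M=\partial_z F$, $L=\partial_{|z|}F$ (evaluated at $(\mathring x,\mathring z,|\mathring z|)$; $M,L$ strictly lower triangular), $a=\partial_x\varphi$, $b=\partial_z\varphi$ (evaluated at $(\mathring x,\mathring z)$). The piecewise linearization of $f$ at $\mathring x$ is $f_{PL,\mathring x}(x)=d_0+a^Tx+b^Tz$ where $z$ solves $z=c+Zx+Mz+L|z|$, with constants $c,d_0$ chosen so that $f_{PL,\mathring x}(\mathring x)=f(\mathring x)$ (namely $c=\mathring z-Z\mathring x-M\mathring z-L|\mathring z|$, $d_0=f(\mathring x)-a^T\mathring x-b^T\mathring z$). The abs-linearization is $\Delta f(\mathring x;x-\mathring x):=f_{PL,\mathring x}(x)-f(\mathring x)$. ''$f_{PL,x}$ convex on $C$'' means $f_{PL,x}(\lambda y+(1-\lambda)w)\le\lambda f_{PL,x}(y)+(1-\lambda)f_{PL,x}(w)$ for all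 $y,w\in C$, $\lambda\in[0,1]$. The curvature constant of $f$ on $C$ is $$\mathcal{C}_f:=\sup_{x,v\in C,\ \alpha\in(0,1],\ y=x+\alpha(v-x)}\frac{2}{\alpha^2}\big|f(y)-f(x)-\Delta f(x;y-x)\big|,$$ which is finite for compact $C$. *)

From HB Require Import structures.
From mathcomp Require Import all_boot all_order all_algebra.
From mathcomp Require Import all_classical all_reals all_analysis.
Import Order.TTheory GRing.Theory Num.Theory.
Import numFieldNormedType.Exports.

Set Implicit Arguments.
Unset Strict Implicit.
Unset Printing Implicit Defensive.

Local Open Scope classical_set_scope.
Local Open Scope ring_scope.

Section AbsSmooth.
Variables (R : realType) (n s : nat).

Definition absv (z : 'rV[R]_s) : 'rV[R]_s := map_mx (fun a => `|a|) z.

(* continuously differentiable (C^1) map between finite-dimensional normed spaces: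
   differentiable everywhere, with differential continuous in the base point
   (tested on every direction, which is equivalent in finite dimension). *)
Definition C1 (V W : normedModType R) (g : V -> W) : Prop :=
  (forall p, differentiable g p) /\ (forall u : V, continuous (fun p => 'd g p u)).

Definition lower_tri (F : 'rV[R]_n * 'rV[R]_s * 'rV[R]_s -> 'rV[R]_s) : Prop :=
  forall (i : 'I_s) (x : 'rV[R]_n) (z w z' w' : 'rV[R]_s),
    (forall j : 'I_s, (j < i)%N -> z 0 j = z' 0 j /\ w 0 j = w' 0 j) ->
    F (x, z, w) 0 i = F (x, z', w') 0 i.

(* solution of a triangular fixed point system z = G z, computed by
   forward substitution: after s sweeps every component is determined *)
Definition tri_solve (G : 'rV[R]_s -> 'rV[R]_s) : 'rV[R]_s := iter s G 0.

Definition zval (F : 'rV[R]_n * 'rV[R]_s * 'rV[R]_s -> 'rV[R]_s) (x : 'rV[R]_n)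
  : 'rV[R]_s := tri_solve (fun z => F (x, z, absv z)).

Definition abs_smooth_form (f : 'rV[R]_n -> R)
  (F : 'rV[R]_n * 'rV[R]_s * 'rV[R]_s -> 'rV[R]_s)
  (phi : 'rV[R]_n * 'rV[R]_s -> R) : Prop :=
  [/\ C1 F, C1 phi, lower_tri F & forall x, f x = phi (x, zval F x)].

Definition locally_lipschitz (f : 'rV[R]_n -> R) : Prop :=
  forall x : 'rV[R]_n, exists2 r : R, 0 < r & exists K : R,
    forall y z, ball x r y -> ball x r z -> `|f y - f z| <= K * `|y - z|.

Definition fPL (f : 'rV[R]_n -> R)
  (F : 'rV[R]_n * 'rV[R]_s * 'rV[R]_s -> 'rV[R]_s)
  (phi : 'rV[R]_n * 'rV[R]_s -> R) (x0 x : 'rV[R]_n) : R :=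
  let z0 := zval F x0 in
  let p0 := (x0, z0, absv z0) in
  let Z := fun dx : 'rV[R]_n => 'd F p0 (dx, 0, 0) in
  let M := fun dz : 'rV[R]_s => 'd F p0 (0, dz, 0) in
  let L := fun dw : 'rV[R]_s => 'd F p0 (0, 0, dw) in
  let a := fun dx : 'rV[R]_n => 'd phi (x0, z0) (dx, 0) in
  let b := fun dz : 'rV[R]_s => 'd phi (x0, z0) (0, dz) in
  let c := z0 - Z x0 - M z0 - L (absv z0) in
  let d0 := f x0 - a x0 - b z0 in
  let z := tri_solve (fun z => c + Z x + M z + L (absv z)) in
  d0 + a x + b z.

Definition absLin f F phi (x0 d : 'rV[R]_n) : R := fPL f F phi x0 (x0 + d) - f x0.

Definition convex_on_set (C : set 'rV[R]_n) (g : 'rV[R]_n -> R) : Prop :=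
  forall y w (l : R), C y -> C w -> 0 <= l <= 1 ->
    g (l *: y + (1 - l) *: w) <= l * g y + (1 - l) * g w.

Definition curv_set f F phi (C : set 'rV[R]_n) : set R :=
  [set r | exists x v (al : R), [/\ C x, C v, 0 < al <= 1 &
     r = 2 / al ^+ 2 *
       `|f (x + al *: (v - x)) - f x - absLin f F phi x ((x + al *: (v - x)) - x)|]].

Definition curv_const f F phi C : R := sup (curv_set f F phi C).

Definition aw (t : nat) : R := (2 * t + 2)%:R.
Definition Aw (t : nat) : R := \sum_(i < t.+1) aw i.
Definition alphaw (t : nat) : R := aw t / Aw t.

Definition Lbound f F phi (Cf eps : R) (x v : nat -> 'rV[R]_n) (t : nat) : R :=
  (Aw t)^-1 * (\sum_(i < t.+1) aw i * f (x i) +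
    \sum_(i < t.+1) aw i * (absLin f F phi (x i) (alphaw i *: (v i - x i)) / alphaw i
                           - Cf / 2 - alphaw i / 2 * eps * Cf)).

Definition gap f F phi Cf eps x v (t : nat) : R :=
  f (x t.+1) - Lbound f F phi Cf eps x v t.

End AbsSmooth.

From HB Require Import structures.
From mathcomp Require Import all_boot all_order all_algebra.
From mathcomp Require Import all_classical all_reals all_analysis.
From mathcomp Require Import ring lra.
Import Order.TTheory GRing.Theory Num.Theory.
Import numFieldNormedType.Exports.
Local Open Scope classical_set_scope.
Local Open Scope ring_scope.

Set Implicit Arguments.
Unset Strict Implicit.
Unset Printing Implicit Defensive.

(* Each summand of A_t L_t is squeezed between two one-step estimates.
   From above: convexity of f_{PL,x_i} on C together with the curvature bound
   at step 1 gives  Delta f(x_i; a (w - x_i)) <= a (f w - f x_i + C_f/2)  for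
   every w in C, and the near-optimality of v_i turns this into
   summand_i <= a_i f(w).  From below: the curvature bound is the descent inequality
   f(x_{i+1}) <= f(x_i) + Delta f(x_i; a_i (v_i - x_i)) + a_i^2 C_f/2, and as
   A_i alpha_i^2 = a_i alpha_i <= 4 the summand is at least
   A_i f(x_{i+1}) - A_{i-1} f(x_i) - a_i C_f/2 - 2 (1 + eps) C_f, which
   telescopes.  Compactness, local Lipschitz continuity and the abs-smooth
   form only serve to make C_f finite, which is assumed outright. *)

Lemma le0_of_le_sqr_scale (R : realFieldType) (d c : R) :
  (forall a : R, 0 < a <= 1 -> d <= a ^+ 2 * c) -> d <= 0.
Proof.
move=> hd; rewrite leNgt; apply/negP => d_gt0.
(* For a := d / (|c| + d) one has a^2 |c| = a (1 - a) d < d. *)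
have cd_gt0 : 0 < `|c| + d by rewrite ltr_pwDr.
pose a := d / (`|c| + d).
have a_gt0 : 0 < a by rewrite divr_gt0.
have a_le1 : a <= 1 by rewrite ler_pdivrMr // mul1r lerDr.
have ha : a * (`|c| + d) = d by rewrite mulfVK ?gt_eqF.
have := hd a; rewrite a_gt0 a_le1 => /(_ isT) hda.
have hc : a ^+ 2 * c <= a ^+ 2 * `|c|.
  by rewrite ler_pM2l ?exprn_gt0 ?ler_norm.
nra.
Qed.

Section Weights.
Variable R : realType.

Lemma AwE t : Aw R t = t.+1%:R * t.+2%:R.
Proof.
elim: t => [|t IH]; first by rewrite /Aw big_ord1 /aw mul1r.
by rewrite /Aw big_ord_recr /= -/(Aw R t) IH /aw !natrD !natrM !mulrSr; ring.
Qed.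

Lemma aw_gt0 t : 0 < aw R t.
Proof. by rewrite ltr0n addn2. Qed.

Lemma Aw_gt0 t : 0 < Aw R t.
Proof. by rewrite AwE mulr_gt0. Qed.

Lemma alphawE t : alphaw R t = 2 / (t%:R + 2).
Proof.
rewrite /alphaw AwE /aw natrD natrM !mulrSr.
have t_ge0 := ler0n R t.
by field; rewrite !gt_eqF //; lra.
Qed.

Lemma alphaw_gt0 t : 0 < alphaw R t.
Proof. by rewrite divr_gt0 ?aw_gt0 ?Aw_gt0. Qed.

Lemma alphaw_le1 t : alphaw R t <= 1.
Proof. by rewrite alphawE ler_pdivrMr ?ltr_wpDl // mul1r lerDr. Qed.

Lemma aw_div_alphaw t : aw R t / alphaw R t = Aw R t.
Proof. by rewrite invf_div mulrC mulfVK ?gt_eqF ?aw_gt0. Qed.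

Lemma Aw_mul_alphaw_sqr t : Aw R t * alphaw R t ^+ 2 = aw R t * alphaw R t.
Proof. by rewrite expr2 mulrA -aw_div_alphaw mulfVK ?gt_eqF ?alphaw_gt0. Qed.

Lemma aw_mul_alphaw_le4 t : aw R t * alphaw R t <= 4.
Proof.
rewrite alphawE /aw -addn1 natrD natrM mulrA ler_pdivrMr ?ltr_wpDl //.
by have := ler0n R t; lra.
Qed.

Lemma natS_div_Aw t : t.+1%:R / Aw R t = (t%:R + 2)^-1.
Proof. by rewrite AwE invfM mulVKf // -addn2 natrD. Qed.

Lemma Aw_sub_aw t : Aw R t - aw R t = \sum_(i < t) aw R i.
Proof. by rewrite /Aw big_ord_recr addrK. Qed.

End Weights.

Section Curvature.
Variables (R : realType) (n s : nat) (C : set 'rV[R]_n) (f : 'rV[R]_n -> R)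
  (F : 'rV[R]_n * 'rV[R]_s * 'rV[R]_s -> 'rV[R]_s)
  (phi : 'rV[R]_n * 'rV[R]_s -> R).
Hypothesis curv_bounded : has_ubound (curv_set f F phi C).
Local Notation Cf := (curv_const f F phi C).
Local Notation Df := (absLin f F phi).

Lemma linearization_error_le x w a : C x -> C w -> 0 < a <= 1 ->
  `|f (x + a *: (w - x)) - f x - Df x (a *: (w - x))| <= a ^+ 2 / 2 * Cf.
Proof.
move=> Cx Cw a01; have a_gt0 : 0 < a by case/andP: a01.
rewrite -[_ / 2]invf_div ler_pdivlMl ?divr_gt0 ?exprn_gt0 //.
apply: (ub_le_sup curv_bounded); exists x, w, a; split=> //.
by rewrite [x + _]addrC addrK.
Qed.

Lemma curv_const_ge0 x : C x -> 0 <= Cf.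
Proof.
move=> Cx; have := linearization_error_le Cx Cx (a:=1).
rewrite ltr01 lexx expr1n => /(_ isT) /(le_trans (normr_ge0 _)).
by rewrite pmulr_rge0.
Qed.

(* Not visible from the definition of fPL: the linearization error at x
   itself is at most a^2 C_f / 2 for every a in (0, 1]. *)
Lemma fPL_self x : C x -> fPL f F phi x x = f x.
Proof.
move=> Cx; apply/eqP; rewrite -subr_eq0 -normr_le0.
apply: (@le0_of_le_sqr_scale _ _ (Cf / 2)) => a a01.
have := linearization_error_le Cx Cx a01.
by rewrite subrr scaler0 addr0 /absLin addr0 subrr sub0r normrN mulrA mulrAC.
Qed.

Lemma fPL_le x w : C x -> C w -> fPL f F phi x w <= f w + Cf / 2.
Proof.
move=> Cx Cw; have := linearization_error_le Cx Cw (a:=1).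
rewrite ltr01 lexx expr1n mul1r scale1r /absLin subrKC => /(_ isT).
by rewrite ler_norml => /andP[+ _]; lra.
Qed.

Lemma descent_le x w a : C x -> C w -> 0 < a <= 1 ->
  f (x + a *: (w - x)) <= f x + Df x (a *: (w - x)) + a ^+ 2 / 2 * Cf.
Proof.
move=> Cx Cw a01; have := linearization_error_le Cx Cw a01.
by rewrite ler_norml => /andP[_]; lra.
Qed.

Lemma absLin_le_of_convex x w a : C x -> C w -> 0 <= a <= 1 ->
  convex_on_set C (fPL f F phi x) -> Df x (a *: (w - x)) <= a * (f w - f x + Cf / 2).
Proof.
move=> Cx Cw a01 convPL.
have := convPL _ _ _ Cw Cx a01; rewrite fPL_self // => hconv.
rewrite /absLin; have -> : x + a *: (w - x) = a *: w + (1 - a) *: x.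
  by apply/rowP => j; rewrite !mxE; ring.
have := fPL_le Cx Cw; case/andP: a01 => a_ge0 _.
nra.
Qed.

End Curvature.

Section RelaxedFrankWolfe.
Variables (R : realType) (n s : nat) (C : set 'rV[R]_n) (f : 'rV[R]_n -> R)
  (F : 'rV[R]_n * 'rV[R]_s * 'rV[R]_s -> 'rV[R]_s)
  (phi : 'rV[R]_n * 'rV[R]_s -> R)
  (eps : R) (x v : nat -> 'rV[R]_n).
Local Notation Cf := (curv_const f F phi C).
Local Notation Df := (absLin f F phi).
Local Notation al := (alphaw R).

Hypotheses (convexC : convex_set C)
  (convexPL : forall x0, C x0 -> convex_on_set C (fPL f F phi x0))
  (curv_bounded : has_ubound (curv_set f F phi C))
  (eps_ge0 : 0 <= eps) (Cx0 : C (x 0)) (Cv : forall t, C (v t))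
  (v_opt : forall t w, C w ->
     Df (x t) (al t *: (v t - x t)) <=
     Df (x t) (al t *: (w - x t)) + 1 / 2 * eps * al t ^+ 2 * Cf)
  (x_step : forall t, x t.+1 = (1 - al t) *: x t + al t *: v t).

Lemma x_step_dir t : x t.+1 = x t + al t *: (v t - x t).
Proof. by rewrite x_step; apply/rowP => j; rewrite !mxE; ring. Qed.

Lemma iterate_in_C t : C (x t).
Proof.
elim: t => [//|t Cxt]; rewrite x_step addrC.
have /andP[al_gt0 al_le1] : 0 <= al t <= 1 by rewrite ltW ?alphaw_gt0 ?alphaw_le1.
have := convexC (Itv01 al_gt0 al_le1) (mem_set (Cv t)) (mem_set Cxt).
by rewrite inE.
Qed.

Definition lower_summand i :=
  aw R i * f (x i) +
  aw R i * (Df (x i) (al i *: (v i - x i)) / al i - Cf / 2 - al i / 2 * eps * Cf).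

Lemma Lbound_sum t :
  Lbound f F phi Cf eps x v t = (Aw R t)^-1 * \sum_(i < t.+1) lower_summand i.
Proof. by rewrite /Lbound -big_split. Qed.

Lemma lower_summand_le i w : C w -> lower_summand i <= aw R i * f w.
Proof.
move=> Cw; have al_gt0 := alphaw_gt0 R i; have al_le1 := alphaw_le1 R i.
have Cxi := iterate_in_C i.
have dual : Df (x i) (al i *: (w - x i)) <= al i * (f w - f (x i) + Cf / 2).
  apply: (absLin_le_of_convex curv_bounded Cxi Cw _ (convexPL Cxi)).
  by rewrite ltW ?al_le1.
have step : Df (x i) (al i *: (v i - x i)) / al i <=
    f w - f (x i) + Cf / 2 + al i / 2 * eps * Cf.
  rewrite ler_pdivrMr //; have := v_opt i Cw; nra.
rewrite /lower_summand -mulrDr ler_pM2l ?aw_gt0 //; lra.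
Qed.

Lemma lower_summand_ge i :
  Aw R i * f (x i.+1) - (Aw R i - aw R i) * f (x i)
    - aw R i * (Cf / 2) - 2 * (1 + eps) * Cf <= lower_summand i.
Proof.
have al_gt0 := alphaw_gt0 R i; have al_le1 := alphaw_le1 R i.
have Cf_ge0 := curv_const_ge0 curv_bounded Cx0.
have descent : f (x i.+1) <=
    f (x i) + Df (x i) (al i *: (v i - x i)) + al i ^+ 2 / 2 * Cf.
  rewrite x_step_dir; apply: (descent_le curv_bounded (iterate_in_C i) (Cv i)).
  by rewrite al_gt0 al_le1.
have := ler_wpM2l (ltW (Aw_gt0 R i)) descent.
have := Aw_mul_alphaw_sqr R i; have := aw_mul_alphaw_le4 R i.
have := aw_div_alphaw R i; rewrite /lower_summand.
set a := aw R i; set A := Aw R i; set D := Df _ _; set c := al i.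
move=> a_div_c ac_le4 Ac2 hA.
have hAD : a * (D / c) = A * D by rewrite -a_div_c mulrCA mulrC.
have h1 : 0 <= (4 - a * c) * Cf by rewrite mulr_ge0 ?subr_ge0.
have h2 : 0 <= (4 - a * c) * (eps * Cf) by rewrite !mulr_ge0 ?subr_ge0.
nra.
Qed.

Lemma sum_lower_summand_ge t :
  Aw R t * f (x t.+1) - Aw R t * (Cf / 2) - t.+1%:R * (2 * (1 + eps) * Cf)
    <= \sum_(i < t.+1) lower_summand i.
Proof.
pose u k := (\sum_(i < k) aw R i) * f (x k).
have tele : \sum_(i < t.+1) (Aw R i * f (x i.+1) - (Aw R i - aw R i) * f (x i))
    = Aw R t * f (x t.+1).
  rewrite (eq_bigr (fun i : 'I_t.+1 => u i.+1 - u i)) => [|i _]; last first.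
    by rewrite /u Aw_sub_aw.
  rewrite -(big_mkord xpredT (fun i => u i.+1 - u i)) telescope_sumr //.
  by rewrite /u big_ord0 mul0r subr0.
set K := 2 * (1 + eps) * Cf.
have -> : Aw R t * f (x t.+1) - Aw R t * (Cf / 2) - t.+1%:R * K =
    \sum_(i < t.+1) (Aw R i * f (x i.+1) - (Aw R i - aw R i) * f (x i)
                     - aw R i * (Cf / 2) - K).
  by rewrite !sumrB -tele sumrB -mulr_suml sumr_const card_ord mulr_natl.
by apply: ler_sum => i _; exact: lower_summand_ge.
Qed.

Lemma Lbound_le t w : C w -> Lbound f F phi Cf eps x v t <= f w.
Proof.
move=> Cw; rewrite Lbound_sum mulrC ler_pdivrMr ?Aw_gt0 // mulr_sumr.
by apply: ler_sum => i _; rewrite mulrC lower_summand_le.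
Qed.

Lemma gap_le t :
  gap f F phi Cf eps x v t <= Cf / 2 + 2 * (1 + eps) * Cf / (t%:R + 2).
Proof.
have A_neq0 : Aw R t != 0 by rewrite gt_eqF ?Aw_gt0.
have Ainv_ge0 : 0 <= (Aw R t)^-1 by rewrite invr_ge0 ltW ?Aw_gt0.
have := ler_wpM2l Ainv_ge0 (sum_lower_summand_ge t).
rewrite !mulrBr !mulKf // (mulrA _ t.+1%:R) (mulrC _ t.+1%:R) natS_div_Aw.
by rewrite -Lbound_sum /gap [(_ + 2)^-1 * _]mulrC; lra.
Qed.

End RelaxedFrankWolfe.

Theorem mainTheorem7 (R : realType) (n s : nat) (C : set 'rV[R]_n)
  (f : 'rV[R]_n -> R)
  (F : 'rV[R]_n * 'rV[R]_s * 'rV[R]_s -> 'rV[R]_s)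
  (phi : 'rV[R]_n * 'rV[R]_s -> R)
  (xstar : 'rV[R]_n) (eps : R) (x v : nat -> 'rV[R]_n) :
  (exists c, C c) -> compact C -> convex_set C ->
  locally_lipschitz f -> abs_smooth_form f F phi ->
  (forall x0, C x0 -> convex_on_set C (fPL f F phi x0)) ->
  has_ubound (curv_set f F phi C) ->
  C xstar -> (forall y, C y -> f xstar <= f y) ->
  0 <= eps ->
  C (x 0%N) ->
  (forall t, C (v t)) ->
  (forall t (w : 'rV[R]_n), C w ->
     absLin f F phi (x t) (alphaw R t *: (v t - x t)) <=
     absLin f F phi (x t) (alphaw R t *: (w - x t))
       + 1 / 2 * eps * alphaw R t ^+ 2 * curv_const f F phi C) ->
  (forall t, x t.+1 = (1 - alphaw R t) *: x t + alphaw R t *: v t) ->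
  forall t : nat,
    f (x t.+1) - f xstar <= gap f F phi (curv_const f F phi C) eps x v t /\
    gap f F phi (curv_const f F phi C) eps x v t <=
      curv_const f F phi C / 2
      + 2 * curv_const f F phi C / (t%:R + 2) * (1 + 2 * eps).
Proof.
move=> _ _ convexC _ _ convexPL curv_bounded Cxstar _ eps_ge0 Cx0 Cv v_opt x_step t.
split.
  rewrite /gap lerD2l lerN2.
  by have := Lbound_le convexC convexPL curv_bounded Cx0 Cv v_opt x_step t Cxstar.
have := gap_le convexC curv_bounded eps_ge0 Cx0 Cv x_step t.
move/le_trans; apply; rewrite lerD2l.
have : 0 <= eps * (curv_const f F phi C / (t%:R + 2)).
  by rewrite mulr_ge0 ?divr_ge0 ?ltr_wpDl ?(curv_const_ge0 curv_bounded Cx0).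
rewrite !mulrA; lra.
Qed.
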